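(* Write the $\varepsilon$-expansions $$\Delta(x,\varepsilon)=\sum_{n\ge1}\Delta_n(x)\varepsilon^n,\qquad Y(x,\varepsilon)=\sum_{n\ge1}Y_n(x)\varepsilon^n.$$ Then for every $n\ge1$, both $\Delta_n(x)$ and $Y_n(x)$ are polynomials of degree $n$ in the quantities $f^{(l)}(x+k\mu)$, $0\le k\le q-1$, $0\le l\le n-1$. In particular $$\Delta_1(x)=-\overline f(x),\qquad Y_1(x)=-\frac{q+1}{2}\,\overline f(x)+\overline{\overline f}(x),$$ where $$\overline f(x)=\frac1q\sum_{k=0}^{q-1}f(x+k\mu),\qquad \overline{\overline f}(x)=\frac1q\sum_{k=0}^{q-1}(q-k)f(x+k\mu).$$
   Context: Fix integers $p$ and $q\ge1$ and put $\mu=2\pi p/q$. Let $f:\mathbb R\to\mathbb R$ be a $2\pi$-periodic real-analytic function. For real parameters $\varepsilon,\delta$ set $g(x)=-\delta-\varepsilon f(x)$ and consider the map $T_{\varepsilon,\delta}(x,y)=(x+y+\mu+g(x),\;y+g(x))$ on $\mathbb R^2$. Define ${}_nR$ and ${}_nS$ by $T^n_{\varepsilon,\delta}(x_0,y_0)=(x_0+n\mu+{}_nR,\;y_0+{}_nS)$. There exist $\bar{\bar\varepsilon},\eta>0$ and real-analytic functions $\Delta(x,\varepsilon)$ and $Y(x,\varepsilon)$, defined for $x\in\mathbb R$ and $|\varepsilon|<\bar{\bar\varepsilon}$ and vanishing at $\varepsilon=0$, such that $(\delta,y)=(\Delta(x,\varepsilon),Y(x,\varepsilon))$ is the unique solution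 with $|\delta|,|y|<\eta$ of ${}_qR(x,y,\varepsilon,\delta)={}_qS(x,y,\varepsilon,\delta)=0$. *)

From Stdlib Require Import Reals List.
From Coquelicot Require Import Coquelicot.
Import ListNotations.
Open Scope R_scope.

Definition rot_number (p : Z) (q : nat) : R := 2 * PI * IZR p / INR q.

Definition Tmap (mu eps delta : R) (f : R -> R) (z : R * R) : R * R :=
  let g := - delta - eps * f (fst z) in
  (fst z + snd z + mu + g, snd z + g).

Definition iterT (n : nat) (mu eps delta : R) (f : R -> R) (x0 y0 : R) : R * R :=
  Nat.iter n (Tmap mu eps delta f) (x0, y0).

Definition nR (n : nat) (mu : R) (f : R -> R) (x0 y0 eps delta : R) : R :=
  fst (iterT n mu eps delta f x0 y0) - x0 - INR n * mu.

Definition nS (n : nat) (mu : R) (f : R -> R) (x0 y0 eps delta : R) : R :=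
  snd (iterT n mu eps delta f x0 y0) - y0.

Definition real_analytic (f : R -> R) : Prop :=
  forall x0, exists r, 0 < r /\ exists a : nat -> R,
    forall x, Rabs (x - x0) < r -> is_pseries a (x - x0) (f x).

Definition real_analytic2_on (D : R -> R -> Prop) (F : R -> R -> R) : Prop :=
  forall x0 e0, D x0 e0 ->
  exists r, 0 < r /\ exists a : nat -> nat -> R,
    forall x e, D x e -> Rabs (x - x0) < r -> Rabs (e - e0) < r ->
      (forall i, ex_series (fun j => Rabs (a i j * (x - x0) ^ i * (e - e0) ^ j))) /\
      ex_series (fun i => Series (fun j => Rabs (a i j * (x - x0) ^ i * (e - e0) ^ j))) /\
      F x e = Series (fun i => Series (fun j => a i j * (x - x0) ^ i * (e - e0) ^ j)).

Definition solution_data (p : Z) (q : nat) (f : R -> R) (eb eta : R)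
  (Delta Y : R -> R -> R) : Prop :=
  let mu := rot_number p q in
  (forall x, f (x + 2 * PI) = f x) /\
  real_analytic f /\
  0 < eb /\ 0 < eta /\
  real_analytic2_on (fun _ e => Rabs e < eb) Delta /\
  real_analytic2_on (fun _ e => Rabs e < eb) Y /\
  (forall x, Delta x 0 = 0 /\ Y x 0 = 0) /\
  (forall x e, Rabs e < eb ->
     Rabs (Delta x e) < eta /\ Rabs (Y x e) < eta /\
     nR q mu f x (Y x e) e (Delta x e) = 0 /\
     nS q mu f x (Y x e) e (Delta x e) = 0) /\
  (forall x e d y, Rabs e < eb -> Rabs d < eta -> Rabs y < eta ->
     nR q mu f x y e d = 0 -> nS q mu f x y e d = 0 ->
     d = Delta x e /\ y = Y x e).

Definition eps_coeff (F : R -> R -> R) (n : nat) (x : R) : R :=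
  Derive_n (fun e => F x e) n 0 / INR (Factorial.fact n).

(** Polynomials with real coefficients in variables v_(k,l):
    a list of monomials (coefficient, list of variable indices, with
    multiplicity). *)
Definition monomial : Type := (R * list (nat * nat))%type.
Definition polynomial : Type := list monomial.

Definition eval_monomial (m : monomial) (v : nat -> nat -> R) : R :=
  fst m * fold_right (fun kl acc => v (fst kl) (snd kl) * acc) 1 (snd m).

Definition eval_poly (P : polynomial) (v : nat -> nat -> R) : R :=
  fold_right (fun m acc => eval_monomial m v + acc) 0 P.

Definition poly_vars_deg (q n d : nat) (P : polynomial) : Prop :=
  List.Forall (fun m =>
    List.Forall (fun kl => (fst kl < q)%nat /\ (snd kl < n)%nat) (snd m) /\
    (length (snd m) <= d)%nat) P.

Definition fbar (q : nat) (mu : R) (f : R -> R) (x : R) : R :=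
  / INR q * fold_right Rplus 0 (map (fun k => f (x + INR k * mu)) (seq 0 q)).

Definition fbarbar (q : nat) (mu : R) (f : R -> R) (x : R) : R :=
  / INR q * fold_right Rplus 0
    (map (fun k => (INR q - INR k) * f (x + INR k * mu)) (seq 0 q)).

(* Follow the orbit (x_k, y_k) = T^k (x, Y(e)) with delta = Delta(e).  Summing
   the map, x_k and y_k are affine in Delta, Y and the forces e f(x_j), j < k, so
   the periodicity conditions qR = qS = 0 express Delta and Y as explicit linear
   combinations of these forces.  Since (e F)^(n)(0) = n F^(n-1)(0), the n-th
   e-derivatives of Delta and Y at 0 only involve the (n-1)-st derivatives of
   F_j = f o x_j, which by the chain rule are polynomials in the f^(l)(x + k mu)
   and in the jets of order < n of Delta and Y; induction on n then gives
   polynomials of degree n, counting e with degree -1. *)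

From Stdlib Require Import Reals List Lra Lia ZArith.
From Coquelicot Require Import Coquelicot.
Open Scope R_scope.

Fixpoint rsum (g : nat -> R) (n : nat) : R :=
  match n with O => 0 | S n => rsum g n + g n end.

Lemma rsum_ext (g h : nat -> R) n :
  (forall j, (j < n)%nat -> g j = h j) -> rsum g n = rsum h n.
Proof.
  induction n as [|n IH]; intros E; simpl; [reflexivity|].
  rewrite IH, E; [reflexivity|lia|intros j Hj; apply E; lia].
Qed.

Lemma rsum_plus (g h : nat -> R) n :
  rsum (fun j => g j + h j) n = rsum g n + rsum h n.
Proof. induction n as [|n IH]; simpl; [ring|rewrite IH; ring]. Qed.

Lemma rsum_zero n : rsum (fun _ => 0) n = 0.
Proof. induction n as [|n IH]; simpl; [reflexivity|rewrite IH; ring]. Qed.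

Lemma rsum_seq (g : nat -> R) n : fold_right Rplus 0 (map g (seq 0 n)) = rsum g n.
Proof.
  assert (acc : forall l a, fold_right Rplus a l = fold_right Rplus 0 l + a).
  { induction l as [|b l IH]; intros a; simpl; [ring|rewrite IH; ring]. }
  induction n as [|n IH]; [reflexivity|].
  rewrite seq_S, map_app, fold_right_app; simpl.
  rewrite acc, IH; ring.
Qed.

(* Coquelicot's derivative rules are stated over an abstract ring; their
   instances at [R] expose [Rplus] and [Rmult] to [ring]. *)
Lemma is_derive_eq (f : R -> R) x l l' : is_derive f x l -> l = l' -> is_derive f x l'.
Proof. now intros H <-. Qed.

Lemma is_derive_Rplus (f g : R -> R) x a b :
  is_derive f x a -> is_derive g x b -> is_derive (fun t => f t + g t) x (a + b).
Proof. exact (is_derive_plus f g x a b). Qed.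

Lemma is_derive_Rmult (f g : R -> R) x a b :
  is_derive f x a -> is_derive g x b -> is_derive (fun t => f t * g t) x (a * g x + f x * b).
Proof. intros Ha Hb; exact (is_derive_mult f g x a b Ha Hb Rmult_comm). Qed.

Lemma is_derive_Rminus (f g : R -> R) x a b :
  is_derive f x a -> is_derive g x b -> is_derive (fun t => f t - g t) x (a - b).
Proof. exact (is_derive_minus f g x a b). Qed.

Lemma is_derive_Rconst (c x : R) : is_derive (fun _ => c) x 0.
Proof. exact (is_derive_const c x). Qed.

Lemma is_derive_Rid x : is_derive (fun t : R => t) x 1.
Proof. exact (is_derive_id x). Qed.

Lemma is_derive_Rcomp (f g : R -> R) x a b :
  is_derive f (g x) a -> is_derive g x b -> is_derive (fun t => f (g t)) x (b * a).
Proof. exact (is_derive_comp f g x a b). Qed.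

Definition smooth_ball (r : R) (g : R -> R) : Prop :=
  forall n e, Rabs e < r -> ex_derive (Derive_n g n) e.

Lemma locally_ball {r e : R} : Rabs e < r -> locally e (fun t : R => Rabs t < r).
Proof.
  intros He. assert (Hp : 0 < r - Rabs e) by lra.
  exists (mkposreal _ Hp).
  change (forall t : R, Rabs (t - e) < r - Rabs e -> Rabs t < r); intros t Ht.
  pose proof (Rabs_triang (t - e) e) as T.
  replace (t - e + e) with t in T by ring; lra.
Qed.

Lemma smooth_ball_le r r' g : r' <= r -> smooth_ball r g -> smooth_ball r' g.
Proof. intros Hr H n e He; apply H; lra. Qed.

Lemma smooth_ball_ext r (g h : R -> R) :
  (forall e, Rabs e < r -> g e = h e) -> smooth_ball r g -> smooth_ball r h.
Proof.
  intros E H n e He.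
  apply ex_derive_ext_loc with (Derive_n g n); [|now apply H].
  apply filter_imp with (2 := locally_ball He); intros t Ht.
  apply Derive_n_ext_loc, filter_imp with (2 := locally_ball Ht); auto.
Qed.

Lemma smooth_ball_locally r g n e : smooth_ball r g -> Rabs e < r ->
  locally e (fun t => forall k, (k <= n)%nat -> ex_derive_n g k t).
Proof.
  intros H He; apply filter_imp with (2 := locally_ball He).
  intros t Ht [|k] _; [exact I|now apply H].
Qed.

Lemma Derive_n_ball_plus {r} {g h : R -> R} n {e} : smooth_ball r g -> smooth_ball r h ->
  Rabs e < r -> Derive_n (fun t => g t + h t) n e = Derive_n g n e + Derive_n h n e.
Proof. intros Hg Hh He; apply Derive_n_plus; eapply smooth_ball_locally; eauto. Qed.

Lemma smooth_ball_const r c : smooth_ball r (fun _ => c).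
Proof.
  intros [|n] e _; [apply ex_derive_const|].
  apply ex_derive_ext with (fun _ => 0); [intros t; symmetry; apply Derive_n_const|].
  apply ex_derive_const.
Qed.

Lemma smooth_ball_plus {r} {g h : R -> R} :
  smooth_ball r g -> smooth_ball r h -> smooth_ball r (fun t => g t + h t).
Proof.
  intros Hg Hh n e He.
  apply ex_derive_ext_loc with (fun t => Derive_n g n t + Derive_n h n t).
  - apply filter_imp with (2 := locally_ball He); intros t Ht.
    symmetry; exact (Derive_n_ball_plus n Hg Hh Ht).
  - destruct (Hg n e He) as [a Ha], (Hh n e He) as [b Hb].
    exists (a + b); now apply is_derive_Rplus.
Qed.

Lemma smooth_ball_scal {r} c {g : R -> R} : smooth_ball r g -> smooth_ball r (fun t => c * g t).
Proof.
  intros H n e He.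
  apply ex_derive_ext with (fun t => c * Derive_n g n t).
  - intros t; symmetry; apply Derive_n_scal_l.
  - destruct (H n e He) as [a Ha]; exists (c * a); now apply is_derive_scal.
Qed.

Lemma smooth_ball_rsum {r} {g : nat -> R -> R} k :
  (forall j, smooth_ball r (g j)) -> smooth_ball r (fun t => rsum (fun j => g j t) k).
Proof.
  intros H; induction k as [|k IH]; simpl.
  - apply smooth_ball_const.
  - now apply smooth_ball_plus.
Qed.

Lemma Derive_n_rsum {r} {g : nat -> R -> R} k n {e} :
  (forall j, smooth_ball r (g j)) -> Rabs e < r ->
  Derive_n (fun t => rsum (fun j => g j t) k) n e = rsum (fun j => Derive_n (g j) n e) k.
Proof.
  intros H He; induction k as [|k IH]; simpl.
  - destruct n; [reflexivity|apply Derive_n_const].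
  - rewrite (Derive_n_ball_plus n (smooth_ball_rsum k H) (H k) He), IH; reflexivity.
Qed.

Lemma Derive_n_id_mul {r} {G : R -> R} n {e} : smooth_ball r G -> Rabs e < r ->
  Derive_n (fun t => t * G t) (S n) e = e * Derive_n G (S n) e + INR (S n) * Derive_n G n e.
Proof.
  intros H; revert e; induction n as [|n IH]; intros e He.
  - apply is_derive_unique; eapply is_derive_eq.
    + apply is_derive_Rmult; [apply is_derive_Rid|apply Derive_correct, (H 0%nat e He)].
    + simpl; change (fun t => G t) with G; ring.
  - simpl Derive_n at 1.
    rewrite (Derive_ext_loc _ (fun t => t * Derive_n G (S n) t + INR (S n) * Derive_n G n t)).
    2: { apply filter_imp with (2 := locally_ball He); intros t Ht; now apply IH. }
    apply is_derive_unique; eapply is_derive_eq.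
    + apply is_derive_Rplus; [apply is_derive_Rmult; [apply is_derive_Rid|]|].
      * apply Derive_correct, (H (S n) e He).
      * apply is_derive_scal, Derive_correct, (H n e He).
    + rewrite (S_INR (S n)); simpl; ring.
Qed.

Lemma Derive_n_id_mul_0 {r} {G : R -> R} n : 0 < r -> smooth_ball r G ->
  Derive_n (fun t => t * G t) (S n) 0 = INR (S n) * Derive_n G n 0.
Proof.
  intros Hr H; rewrite (Derive_n_id_mul n H); [ring|now rewrite Rabs_R0].
Qed.

Section Expressions.

Context {V : Type}.

Inductive pexpr : Type :=
  | PC (c : R)
  | PV (v : V)
  | PAdd (P Q : pexpr)
  | PMul (P Q : pexpr).

Definition PSub (P Q : pexpr) : pexpr := PAdd P (PMul (PC (-1)) Q).

Fixpoint pev (env : V -> R) (P : pexpr) : R :=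
  match P with
  | PC c => c
  | PV v => env v
  | PAdd P Q => pev env P + pev env Q
  | PMul P Q => pev env P * pev env Q
  end.

Fixpoint pweight (w : V -> Z) (P : pexpr) : Z :=
  match P with
  | PC _ => 0%Z
  | PV v => w v
  | PAdd P Q => Z.max (pweight w P) (pweight w Q)
  | PMul P Q => (pweight w P + pweight w Q)%Z
  end.

Fixpoint pvars (A : V -> Prop) (P : pexpr) : Prop :=
  match P with
  | PC _ => True
  | PV v => A v
  | PAdd P Q | PMul P Q => pvars A P /\ pvars A Q
  end.

Lemma pvars_impl (A B : V -> Prop) P : (forall v, A v -> B v) -> pvars A P -> pvars B P.
Proof. intros H; induction P; simpl; intuition. Qed.

Variable dv : V -> pexpr.

Fixpoint pderiv (P : pexpr) : pexpr :=
  match P with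
  | PC _ => PC 0
  | PV v => dv v
  | PAdd P Q => PAdd (pderiv P) (pderiv Q)
  | PMul P Q => PAdd (PMul (pderiv P) Q) (PMul P (pderiv Q))
  end.

Lemma is_derive_pev (env : R -> V -> R) e :
  (forall v, is_derive (fun t => env t v) e (pev (env e) (dv v))) ->
  forall P, is_derive (fun t => pev (env t) P) e (pev (env e) (pderiv P)).
Proof.
  intros H P; induction P; simpl.
  - apply is_derive_Rconst.
  - apply H.
  - now apply is_derive_Rplus.
  - now apply is_derive_Rmult.
Qed.

Section OnBall.

Variables (env : R -> V -> R) (r : R).
Hypothesis env_deriv :
  forall e, Rabs e < r -> forall v, is_derive (fun t => env t v) e (pev (env e) (dv v)).

Lemma Derive_n_pev P n e : Rabs e < r ->
  Derive_n (fun t => pev (env t) P) n e = pev (env e) (Nat.iter n pderiv P).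
Proof.
  revert e; induction n as [|n IH]; intros e He; [reflexivity|].
  simpl Derive_n.
  rewrite (Derive_ext_loc _ (fun t => pev (env t) (Nat.iter n pderiv P))).
  - apply is_derive_unique, is_derive_pev; auto.
  - apply filter_imp with (2 := locally_ball He); intros t Ht; auto.
Qed.

Lemma smooth_ball_pev P : smooth_ball r (fun t => pev (env t) P).
Proof.
  intros n e He.
  apply ex_derive_ext_loc with (fun t => pev (env t) (Nat.iter n pderiv P)).
  - apply filter_imp with (2 := locally_ball He); intros t Ht.
    symmetry; now apply Derive_n_pev.
  - eexists; apply is_derive_pev; auto.
Qed.

End OnBall.

Lemma pweight_pderiv (w : V -> Z) :
  (forall v, (pweight w (dv v) <= w v + 1)%Z) ->
  forall P, (pweight w (pderiv P) <= pweight w P + 1)%Z.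
Proof. intros H P; induction P; simpl; try specialize (H v); lia. Qed.

Lemma pvars_pderiv (A B : V -> Prop) :
  (forall v, A v -> B v) -> (forall v, A v -> pvars B (dv v)) ->
  forall P, pvars A P -> pvars B (pderiv P).
Proof.
  intros AB H P; induction P; simpl; intuition; eapply pvars_impl; eauto.
Qed.

End Expressions.

Arguments pexpr : clear implicits.

Lemma eval_poly_app (P1 P2 : polynomial) v :
  eval_poly (P1 ++ P2) v = eval_poly P1 v + eval_poly P2 v.
Proof. induction P1 as [|m P1 IH]; simpl; [ring|rewrite IH; ring]. Qed.

Definition poly_mul (P1 P2 : polynomial) : polynomial :=
  flat_map (fun m1 => map (fun m2 => (fst m1 * fst m2, snd m1 ++ snd m2)) P2) P1.

Lemma eval_monomial_mul c1 l1 c2 l2 v :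
  eval_monomial (c1 * c2, l1 ++ l2) v = eval_monomial (c1, l1) v * eval_monomial (c2, l2) v.
Proof.
  set (step := fun kl acc => v (fst kl) (snd kl) * acc).
  assert (acc : forall l a, fold_right step a l = fold_right step 1 l * a).
  { induction l as [|kl l IH]; intros a; simpl; [ring|rewrite IH; unfold step; ring]. }
  unfold eval_monomial; simpl; fold step.
  rewrite fold_right_app, acc; ring.
Qed.

Lemma eval_poly_mul (P1 P2 : polynomial) v :
  eval_poly (poly_mul P1 P2) v = eval_poly P1 v * eval_poly P2 v.
Proof.
  induction P1 as [|[c1 l1] P1 IH]; simpl; [ring|].
  rewrite eval_poly_app, IH.
  enough (E : eval_poly (map (fun m2 => (c1 * fst m2, l1 ++ snd m2)) P2) v =
              eval_monomial (c1, l1) v * eval_poly P2 v) by (rewrite E; ring).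
  clear IH; induction P2 as [|[c2 l2] P2 IH2]; simpl; [ring|].
  rewrite IH2, (eval_monomial_mul c1 l1 c2 l2); ring.
Qed.

(* The degree is an integer: variables of negative weight occur in the
   symbolic jets, and a bound [d < 0] forces the zero polynomial. *)
Definition poly_bounded (q L : nat) (d : Z) (P : polynomial) : Prop :=
  List.Forall (fun m => List.Forall (fun kl => (fst kl < q)%nat /\ (snd kl < L)%nat) (snd m) /\
                   (Z.of_nat (length (snd m)) <= d)%Z) P.

Section Representable.

Context {I : Type} {admissible : I -> Prop} {target : I -> nat -> nat -> R} {q : nat}.

Definition representable (d : Z) (L : nat) (F : I -> R) : Prop :=
  exists P, poly_bounded q L d P /\ forall i, admissible i -> F i = eval_poly P (target i).

Lemma representable_ext d L (F G : I -> R) :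
  (forall i, admissible i -> F i = G i) -> representable d L F -> representable d L G.
Proof. intros E [P [HP EP]]; exists P; split; [exact HP|]; intros i Hi; rewrite <- E; auto. Qed.

Lemma representable_weaken d d' L L' F : (d <= d')%Z -> (L <= L')%nat ->
  representable d L F -> representable d' L' F.
Proof.
  intros Hd HL [P [HP EP]]; exists P; split; [|exact EP].
  eapply Forall_impl; [|exact HP]; intros m [Hm Hlen]; split; [|lia].
  eapply Forall_impl; [|exact Hm]; simpl; intros kl ?; lia.
Qed.

Lemma representable_zero d L : representable d L (fun _ => 0).
Proof. exists nil; split; [constructor|reflexivity]. Qed.

Lemma representable_const L c : representable 0 L (fun _ => c).
Proof.
  exists ((c, nil) :: nil); split.
  - repeat constructor; simpl; lia.
  - intros; unfold eval_poly, eval_monomial; simpl; ring.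
Qed.

Lemma representable_target L k l : (k < q)%nat -> (l < L)%nat ->
  representable 1 L (fun i => target i k l).
Proof.
  intros Hk Hl; exists ((1, (k, l) :: nil) :: nil); split.
  - repeat constructor; simpl; lia.
  - intros; unfold eval_poly, eval_monomial; simpl; ring.
Qed.

Lemma representable_add {d1 d2 L F G} :
  representable d1 L F -> representable d2 L G ->
  representable (Z.max d1 d2) L (fun i => F i + G i).
Proof.
  intros [P1 [H1 E1]] [P2 [H2 E2]]; exists (P1 ++ P2); split.
  - apply Forall_app; split; (eapply Forall_impl; [|eassumption]); intros m [? ?]; split; auto; lia.
  - intros i Hi; rewrite eval_poly_app, E1, E2; auto.
Qed.

Lemma representable_mul {d1 d2 L F G} :
  representable d1 L F -> representable d2 L G ->
  representable (d1 + d2) L (fun i => F i * G i).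
Proof.
  intros [P1 [H1 E1]] [P2 [H2 E2]]; exists (poly_mul P1 P2); split.
  - unfold poly_bounded in *; apply Forall_forall; intros m Hm.
    apply in_flat_map in Hm as [m1 [Hm1 Hm]]; apply in_map_iff in Hm as [m2 [<- Hm2]].
    rewrite Forall_forall in H1, H2.
    destruct (H1 m1 Hm1) as [A1 B1], (H2 m2 Hm2) as [A2 B2]; simpl; split.
    + now apply Forall_app.
    + rewrite length_app; lia.
  - intros i Hi; rewrite eval_poly_mul, E1, E2; auto.
Qed.

Lemma representable_scal {d L} c {F} : representable d L F -> representable d L (fun i => c * F i).
Proof. intros H; exact (representable_mul (representable_const L c) H). Qed.

Lemma representable_rsum d L (F : nat -> I -> R) k :
  (forall j, (j < k)%nat -> representable d L (F j)) ->
  representable d L (fun i => rsum (fun j => F j i) k).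
Proof.
  induction k as [|k IH]; intros H; simpl; [apply representable_zero|].
  apply representable_weaken with (Z.max d d) L; [lia|lia|].
  apply representable_add; [apply IH; intros j Hj|]; apply H; lia.
Qed.

Lemma representable_pev {V : Type} (env : I -> V -> R) (w : V -> Z) L P :
  pvars (fun v => representable (w v) L (fun i => env i v)) P ->
  representable (pweight w P) L (fun i => pev (env i) P).
Proof.
  induction P; simpl; intros H.
  - apply representable_const.
  - exact H.
  - destruct H; apply representable_add; auto.
  - destruct H; apply representable_mul; auto.
Qed.

End Representable.

Arguments representable {I} admissible target q d L F.

Section Orbit.

Variables (mu : R) (f D Y : R -> R) (x : R).

Definition orbit_x (k : nat) (e : R) : R := fst (iterT k mu e (D e) f x (Y e)).
Definition orbit_y (k : nat) (e : R) : R := snd (iterT k mu e (D e) f x (Y e)).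
Definition orbit_force (k : nat) (e : R) : R := e * f (orbit_x k e).

Lemma orbit_y_S k e : orbit_y (S k) e = orbit_y k e - D e - orbit_force k e.
Proof.
  unfold orbit_force, orbit_x, orbit_y, iterT; simpl.
  destruct (Nat.iter k _ _) as [u v]; simpl; ring.
Qed.

Lemma orbit_x_S k e : orbit_x (S k) e = orbit_x k e + orbit_y (S k) e + mu.
Proof.
  unfold orbit_x, orbit_y, iterT; simpl.
  destruct (Nat.iter k _ _) as [u v]; simpl; ring.
Qed.

Lemma orbit_y_closed k e :
  orbit_y k e = Y e - INR k * D e - rsum (fun j => orbit_force j e) k.
Proof.
  induction k as [|k IH]; [unfold orbit_y; simpl; ring|].
  rewrite orbit_y_S, IH, S_INR; simpl; ring.
Qed.

Lemma orbit_x_closed k e :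
  orbit_x k e = x + INR k * mu + INR k * Y e - INR k * (INR k + 1) / 2 * D e
                - rsum (fun j => (INR k - INR j) * orbit_force j e) k.
Proof.
  induction k as [|k IH]; [simpl; unfold orbit_x; simpl; field|].
  rewrite orbit_x_S, IH, orbit_y_closed; cbn [rsum].
  rewrite (rsum_ext (fun j => (INR (S k) - INR j) * orbit_force j e)
                    (fun j => (INR k - INR j) * orbit_force j e + orbit_force j e))
    by (intros j _; rewrite S_INR; ring).
  rewrite rsum_plus, S_INR; field.
Qed.

Lemma periodic_orbit_D q e : (1 <= q)%nat -> nS q mu f x (Y e) e (D e) = 0 ->
  D e = - / INR q * rsum (fun j => orbit_force j e) q.
Proof.
  intros Hq HS; assert (Hq0 : INR q <> 0) by (apply not_0_INR; lia).
  unfold nS in HS; fold (orbit_y q e) in HS; rewrite orbit_y_closed in HS.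
  replace (rsum _ q) with (- (INR q * D e)) by lra; field; exact Hq0.
Qed.

Lemma periodic_orbit_Y q e : (1 <= q)%nat -> nR q mu f x (Y e) e (D e) = 0 ->
  Y e = / INR q * (INR q * (INR q + 1) / 2 * D e
                   + rsum (fun j => (INR q - INR j) * orbit_force j e) q).
Proof.
  intros Hq HR; assert (Hq0 : INR q <> 0) by (apply not_0_INR; lia).
  unfold nR in HR; fold (orbit_x q e) in HR; rewrite orbit_x_closed in HR.
  replace (rsum _ q) with (INR q * Y e - INR q * (INR q + 1) / 2 * D e) by lra.
  field; exact Hq0.
Qed.

End Orbit.

Inductive jet_var : Type :=
  | jD (l : nat)
  | jY (l : nat)
  | jE
  | jF (k l : nat).

(* Symbolic first derivatives of [orbit_x k] and [orbit_y k], obtained by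
   differentiating one step of the map. *)
Fixpoint orbit_dxy (k : nat) : pexpr jet_var * pexpr jet_var :=
  match k with
  | O => (PC 0, PV (jY 1))
  | S k =>
      let (dx, dy) := orbit_dxy k in
      let dy' := PSub (PSub dy (PV (jD 1)))
                      (PAdd (PV (jF k 0)) (PMul (PV jE) (PMul (PV (jF k 1)) dx))) in
      (PAdd dx dy', dy')
  end.

Definition jet_deriv (v : jet_var) : pexpr jet_var :=
  match v with
  | jD l => PV (jD (S l))
  | jY l => PV (jY (S l))
  | jE => PC 1
  | jF k l => PMul (PV (jF k (S l))) (fst (orbit_dxy k))
  end.

Definition jet_env (mu : R) (f D Y : R -> R) (x e : R) (v : jet_var) : R :=
  match v with
  | jD l => Derive_n D l e
  | jY l => Derive_n Y l e
  | jE => e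
  | jF k l => Derive_n f l (orbit_x mu f D Y x k e)
  end.

(* The degree in [f]: the map depends on [e] and [f] only through [e f], so under
   [(e, f) -> (e / s, s f)] the variable [e] has weight -1, every derivative
   of [f] weight 1, and the l-th derivatives of [D] and [Y] weight l. *)
Definition jet_weight (v : jet_var) : Z :=
  match v with
  | jD l | jY l => Z.of_nat l
  | jE => (-1)%Z
  | jF _ _ => 1%Z
  end.

Definition jet_var_le (K m : nat) (v : jet_var) : Prop :=
  match v with
  | jD l | jY l => (l <= m)%nat
  | jE => True
  | jF k l => (k < K)%nat /\ (l <= m)%nat
  end.

Lemma jet_var_le_mono K K' m m' v : (K <= K')%nat -> (m <= m')%nat ->
  jet_var_le K m v -> jet_var_le K' m' v.
Proof. destruct v; simpl; intuition lia. Qed.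

Lemma orbit_dxy_bounds k :
  (pweight jet_weight (fst (orbit_dxy k)) <= 1)%Z /\
  (pweight jet_weight (snd (orbit_dxy k)) <= 1)%Z /\
  pvars (jet_var_le k 1) (fst (orbit_dxy k)) /\
  pvars (jet_var_le k 1) (snd (orbit_dxy k)).
Proof.
  induction k as [|k IH]; cbn -[Z.add Z.max]; [repeat split; lia|].
  destruct (orbit_dxy k) as [dx dy]; cbn -[Z.add Z.max] in *.
  destruct IH as (Wx & Wy & Vx & Vy).
  assert (Vx' : pvars (jet_var_le (S k) 1) dx)
    by (eapply pvars_impl; [|exact Vx]; intros v; apply jet_var_le_mono; lia).
  assert (Vy' : pvars (jet_var_le (S k) 1) dy)
    by (eapply pvars_impl; [|exact Vy]; intros v; apply jet_var_le_mono; lia).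
  repeat split; auto; lia.
Qed.

Lemma jet_deriv_weight v : (pweight jet_weight (jet_deriv v) <= jet_weight v + 1)%Z.
Proof.
  destruct v as [l|l| |k l]; cbn -[Z.add Z.max Z.of_nat]; try lia.
  destruct (orbit_dxy_bounds k) as [W _]; lia.
Qed.

Lemma jet_deriv_vars K m v : jet_var_le K m v -> pvars (jet_var_le K (S m)) (jet_deriv v).
Proof.
  destruct v as [l|l| |k l]; simpl; try lia.
  intros [Hk Hl]; split; [lia|].
  destruct (orbit_dxy_bounds k) as (_ & _ & V & _).
  eapply pvars_impl; [|exact V]; intros v; apply jet_var_le_mono; lia.
Qed.

Lemma jet_f_iter_bounds k m :
  (pweight jet_weight (Nat.iter m (pderiv jet_deriv) (PV (jF k 0))) <= Z.of_nat m + 1)%Z /\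
  pvars (jet_var_le (S k) m) (Nat.iter m (pderiv jet_deriv) (PV (jF k 0))).
Proof.
  induction m as [|m [W V]]; [simpl; split; lia|].
  simpl Nat.iter; split.
  - pose proof (pweight_pderiv jet_deriv jet_weight jet_deriv_weight
                  (Nat.iter m (pderiv jet_deriv) (PV (jF k 0)))); lia.
  - apply (pvars_pderiv jet_deriv (jet_var_le (S k) m)); auto.
    + intros v; apply jet_var_le_mono; lia.
    + apply jet_deriv_vars.
Qed.

Section OrbitDerivative.

Context {mu r : R} {f D Y : R -> R} {x : R}.
Hypotheses (f_smooth : forall n y, ex_derive (Derive_n f n) y)
           (D_smooth : smooth_ball r D) (Y_smooth : smooth_ball r Y).

Local Notation env := (jet_env mu f D Y x).

Lemma is_derive_orbit k e : Rabs e < r ->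
  is_derive (orbit_x mu f D Y x k) e (pev (env e) (fst (orbit_dxy k))) /\
  is_derive (orbit_y mu f D Y x k) e (pev (env e) (snd (orbit_dxy k))).
Proof.
  intros He; induction k as [|k IH]; simpl.
  - split; [exact (is_derive_Rconst x e)|apply Derive_correct, (Y_smooth 0%nat e He)].
  - destruct (orbit_dxy k) as [dx dy]; simpl in *; destruct IH as [IHx IHy].
    assert (Hy : is_derive (orbit_y mu f D Y x (S k)) e
      (pev (env e) dy + -1 * Derive_n D 1 e
       + -1 * (f (orbit_x mu f D Y x k e)
               + e * (Derive_n f 1 (orbit_x mu f D Y x k e) * pev (env e) dx)))).
    { apply is_derive_ext with (fun t => orbit_y mu f D Y x k t - D t - orbit_force mu f D Y x k t).
      { intros t; symmetry; apply orbit_y_S. }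
      eapply is_derive_eq.
      - apply is_derive_Rminus; [apply is_derive_Rminus|].
        + exact IHy.
        + apply Derive_correct, (D_smooth 0%nat e He).
        + apply is_derive_Rmult; [apply is_derive_Rid|].
          apply is_derive_Rcomp; [apply Derive_correct, (f_smooth 0%nat)|exact IHx].
      - simpl; change (fun t => D t) with D; change (fun t => f t) with f; ring. }
    split; [|exact Hy].
    apply is_derive_ext with (fun t => orbit_x mu f D Y x k t + orbit_y mu f D Y x (S k) t + mu).
    { intros t; symmetry; apply orbit_x_S. }
    eapply is_derive_eq.
    + apply is_derive_Rplus; [apply is_derive_Rplus; [exact IHx|exact Hy]|].
      apply is_derive_Rconst.
    + simpl; ring.
Qed.

Lemma is_derive_jet_env e v : Rabs e < r ->
  is_derive (fun t => env t v) e (pev (env e) (jet_deriv v)).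
Proof.
  intros He; destruct v as [l|l| |k l]; simpl.
  - apply Derive_correct, D_smooth, He.
  - apply Derive_correct, Y_smooth, He.
  - apply is_derive_Rid.
  - eapply is_derive_eq.
    + apply is_derive_Rcomp; [apply Derive_correct, f_smooth|apply (is_derive_orbit k e He)].
    + apply Rmult_comm.
Qed.

End OrbitDerivative.

Set Implicit Arguments.

Record periodic_branch (mu : R) (q : nat) (f D Y : R -> R) (x r : R) : Prop := {
  branch_radius : 0 < r;
  branch_f_smooth : forall n y, ex_derive (Derive_n f n) y;
  branch_D_smooth : smooth_ball r D;
  branch_Y_smooth : smooth_ball r Y;
  branch_D_0 : D 0 = 0;
  branch_Y_0 : Y 0 = 0;
  branch_nR : forall e, Rabs e < r -> nR q mu f x (Y e) e (D e) = 0;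
  branch_nS : forall e, Rabs e < r -> nS q mu f x (Y e) e (D e) = 0
}.

Unset Implicit Arguments.

Section BranchJets.

Context {mu : R} {q : nat} {f D Y : R -> R} {x r : R}.
Hypotheses (Hq : (1 <= q)%nat) (B : periodic_branch mu q f D Y x r).

Local Notation env := (jet_env mu f D Y x).
Local Notation xs := (orbit_x mu f D Y x).
Local Notation force := (orbit_force mu f D Y x).

Lemma branch_0_inside : Rabs 0 < r.
Proof. rewrite Rabs_R0; apply B. Qed.

Lemma branch_env_deriv e : Rabs e < r ->
  forall v, is_derive (fun t => env t v) e (pev (env e) (jet_deriv v)).
Proof.
  intros He v.
  exact (is_derive_jet_env (branch_f_smooth B) (branch_D_smooth B) (branch_Y_smooth B) e v He).
Qed.

Lemma smooth_ball_orbit_f k : smooth_ball r (fun e => f (xs k e)).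
Proof. exact (smooth_ball_pev jet_deriv env r branch_env_deriv (PV (jF k 0))). Qed.

Lemma smooth_ball_orbit_force k : smooth_ball r (force k).
Proof. exact (smooth_ball_pev jet_deriv env r branch_env_deriv (PMul (PV jE) (PV (jF k 0)))). Qed.

Lemma orbit_x_branch_0 k : xs k 0 = x + INR k * mu.
Proof.
  rewrite orbit_x_closed, (branch_D_0 B), (branch_Y_0 B).
  rewrite (rsum_ext _ (fun _ => 0)), rsum_zero; [ring|].
  intros j _; unfold orbit_force; ring.
Qed.

Lemma Derive_n_orbit_f k m :
  Derive_n (fun e => f (xs k e)) m 0 = pev (env 0) (Nat.iter m (pderiv jet_deriv) (PV (jF k 0))).
Proof. exact (Derive_n_pev jet_deriv env r branch_env_deriv (PV (jF k 0)) m 0 branch_0_inside). Qed.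

Lemma Derive_n_orbit_force k n :
  Derive_n (force k) (S n) 0 = INR (S n) * Derive_n (fun e => f (xs k e)) n 0.
Proof. exact (Derive_n_id_mul_0 n (branch_radius B) (smooth_ball_orbit_f k)). Qed.

Lemma Derive_n_branch_D n :
  Derive_n D n 0 = - / INR q * rsum (fun j => Derive_n (force j) n 0) q.
Proof.
  rewrite (Derive_n_ext_loc D (fun e => - / INR q * rsum (fun j => force j e) q)).
  - rewrite Derive_n_scal_l, (Derive_n_rsum q n smooth_ball_orbit_force branch_0_inside).
    reflexivity.
  - apply filter_imp with (2 := locally_ball branch_0_inside); intros e He.
    apply periodic_orbit_D; [exact Hq|exact (branch_nS B e He)].
Qed.

Lemma Derive_n_branch_Y n :
  Derive_n Y n 0 = / INR q * (INR q * (INR q + 1) / 2 * Derive_n D n 0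
                              + rsum (fun j => (INR q - INR j) * Derive_n (force j) n 0) q).
Proof.
  set (c := INR q * (INR q + 1) / 2).
  assert (Sw : forall j, smooth_ball r (fun e => (INR q - INR j) * force j e))
    by (intros j; apply smooth_ball_scal, smooth_ball_orbit_force).
  rewrite (Derive_n_ext_loc Y
    (fun e => / INR q * (c * D e + rsum (fun j => (INR q - INR j) * force j e) q))).
  - rewrite Derive_n_scal_l, (Derive_n_ball_plus n (smooth_ball_scal c (branch_D_smooth B))
                                (smooth_ball_rsum q Sw) branch_0_inside).
    rewrite Derive_n_scal_l, (Derive_n_rsum q n Sw branch_0_inside).
    do 2 f_equal; apply rsum_ext; intros j _; apply Derive_n_scal_l.
  - apply filter_imp with (2 := locally_ball branch_0_inside); intros e He.
    apply periodic_orbit_Y; [exact Hq|exact (branch_nR B e He)].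
Qed.

Lemma branch_first_jets :
  Derive_n D 1 0 = - / INR q * rsum (fun j => f (x + INR j * mu)) q /\
  Derive_n Y 1 0 = / INR q * (INR q * (INR q + 1) / 2 * Derive_n D 1 0
                              + rsum (fun j => (INR q - INR j) * f (x + INR j * mu)) q).
Proof.
  assert (F1 : forall j, Derive_n (force j) 1 0 = f (x + INR j * mu)).
  { intros j; rewrite Derive_n_orbit_force; simpl; rewrite orbit_x_branch_0; ring. }
  split.
  - rewrite Derive_n_branch_D; f_equal; apply rsum_ext; intros j _; apply F1.
  - rewrite (Derive_n_branch_Y 1); do 2 f_equal; apply rsum_ext; intros j _; rewrite F1; reflexivity.
Qed.

End BranchJets.

Record branch_instance : Type :=
  BranchInstance { bi_f : R -> R; bi_D : R -> R; bi_Y : R -> R; bi_x : R }.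

Section Representation.

Variables (mu : R) (q : nat).
Hypothesis Hq : (1 <= q)%nat.

Definition branch_admissible (i : branch_instance) : Prop :=
  exists r, periodic_branch mu q (bi_f i) (bi_D i) (bi_Y i) (bi_x i) r.

Definition branch_target (i : branch_instance) (k l : nat) : R :=
  Derive_n (bi_f i) l (bi_x i + INR k * mu).

Local Notation representable_jet := (representable branch_admissible branch_target q).
Local Notation xs i := (orbit_x mu (bi_f i) (bi_D i) (bi_Y i) (bi_x i)).
Local Notation force i := (orbit_force mu (bi_f i) (bi_D i) (bi_Y i) (bi_x i)).

Definition jets_representable (n : nat) : Prop :=
  representable_jet (Z.of_nat n) n (fun i => Derive_n (bi_D i) n 0) /\
  representable_jet (Z.of_nat n) n (fun i => Derive_n (bi_Y i) n 0).

Lemma representable_orbit_f m j : (j < q)%nat ->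
  (forall a, (a <= m)%nat -> jets_representable a) ->
  representable_jet (Z.of_nat m + 1) (S m) (fun i => Derive_n (fun e => bi_f i (xs i j e)) m 0).
Proof.
  intros Hj IH.
  apply representable_ext with
    (fun i => pev (jet_env mu (bi_f i) (bi_D i) (bi_Y i) (bi_x i) 0)
                  (Nat.iter m (pderiv jet_deriv) (PV (jF j 0)))).
  { intros i [r B]; symmetry; exact (Derive_n_orbit_f B j m). }
  destruct (jet_f_iter_bounds j m) as [W V].
  apply representable_weaken with (pweight jet_weight (Nat.iter m (pderiv jet_deriv) (PV (jF j 0))))
    (S m); [exact W|lia|].
  apply representable_pev; eapply pvars_impl; [|exact V].
  intros [l|l| |k l] Hv; simpl in Hv.
  - destruct (IH l Hv) as [A _]; eapply representable_weaken; [| |exact A]; simpl; lia.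
  - destruct (IH l Hv) as [_ A]; eapply representable_weaken; [| |exact A]; simpl; lia.
  - apply representable_zero.
  - apply representable_ext with (fun i => branch_target i k l).
    { intros i [r B]; unfold branch_target; simpl; rewrite (orbit_x_branch_0 B); reflexivity. }
    apply representable_target; lia.
Qed.

Lemma jets_representable_0 : jets_representable 0.
Proof.
  split; apply representable_ext with (fun _ => 0); try apply representable_zero;
    intros i [r B]; symmetry; apply B.
Qed.

Lemma jets_representable_S m :
  (forall a, (a <= m)%nat -> jets_representable a) -> jets_representable (S m).
Proof.
  intros IH.
  assert (Hforce : forall j, (j < q)%nat ->
            representable_jet (Z.of_nat (S m)) (S m) (fun i => Derive_n (force i j) (S m) 0)).
  { intros j Hj.
    apply representable_ext with (fun i => INR (S m) * Derive_n (fun e => bi_f i (xs i j e)) m 0).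
    { intros i [r B]; symmetry; exact (Derive_n_orbit_force B j m). }
    apply representable_scal.
    eapply representable_weaken; [| |apply representable_orbit_f]; auto; lia. }
  assert (HD : representable_jet (Z.of_nat (S m)) (S m) (fun i => Derive_n (bi_D i) (S m) 0)).
  { apply representable_ext with
      (fun i => - / INR q * rsum (fun j => Derive_n (force i j) (S m) 0) q).
    { intros i [r B]; symmetry; exact (Derive_n_branch_D Hq B (S m)). }
    apply representable_scal, representable_rsum, Hforce. }
  split; [exact HD|].
  apply representable_ext with
    (fun i => / INR q * (INR q * (INR q + 1) / 2 * Derive_n (bi_D i) (S m) 0
              + rsum (fun j => (INR q - INR j) * Derive_n (force i j) (S m) 0) q)).
  { intros i [r B]; symmetry; exact (Derive_n_branch_Y Hq B (S m)). }
  apply representable_scal.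
  apply representable_weaken with (Z.max (Z.of_nat (S m)) (Z.of_nat (S m))) (S m); [lia|lia|].
  apply representable_add; [now apply representable_scal|].
  apply representable_rsum; intros j Hj; apply representable_scal, Hforce, Hj.
Qed.

Lemma jets_representable_all n : jets_representable n.
Proof.
  enough (H : forall m a, (a <= m)%nat -> jets_representable a) by exact (H n n (le_n n)).
  induction m as [|m IH]; intros a Ha.
  - replace a with 0%nat by lia; exact jets_representable_0.
  - destruct (Nat.eq_dec a (S m)) as [->|Hne]; [|apply IH; lia].
    exact (jets_representable_S m IH).
Qed.

End Representation.

Lemma Series_first (u : nat -> R) : (forall i, u (S i) = 0) -> Series u = u 0%nat.
Proof.
  intros H; apply is_series_unique.
  apply filterlim_ext with (fun _ => u 0%nat); [|apply filterlim_const].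
  induction x as [|n IH]; [now rewrite sum_O|].
  rewrite sum_Sn, <- IH, H; symmetry; exact (Rplus_0_r _).
Qed.

Lemma smooth_ball_PSeries (a : nat -> R) r :
  (forall h, Rabs h < r -> Rbar_lt (Rabs h) (CV_radius a)) -> smooth_ball r (PSeries a).
Proof. intros H n h Hh; exact (ex_derive_n_PSeries (S n) a h (H h Hh)). Qed.

Lemma CV_radius_gt (a : nat -> R) rho :
  (forall r, 0 <= r < rho -> CV_disk a r) ->
  forall h, Rabs h < rho -> Rbar_lt (Rabs h) (CV_radius a).
Proof.
  intros H h Hh.
  assert (Hr : 0 <= (Rabs h + rho) / 2 < rho) by (pose proof (Rabs_pos h); lra).
  apply Rbar_lt_le_trans with (Finite ((Rabs h + rho) / 2)); [simpl; lra|].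
  exact (proj1 (Lub_Rbar_correct (CV_disk a)) _ (H _ Hr)).
Qed.

Lemma real_analytic_smooth (f : R -> R) : real_analytic f -> forall n y, ex_derive (Derive_n f n) y.
Proof.
  intros Hf n y; destruct (Hf y) as [r [Hr [a Ha]]].
  set (g := fun h => f (h + y)).
  assert (Hrad : forall h, Rabs h < r / 2 -> Rbar_lt (Rabs h) (CV_radius a)).
  { assert (Hconv : ex_series (fun k => a k * (r / 2) ^ k)).
    { apply ex_pseries_R; exists (f (y + r / 2)).
      pose proof (Ha (y + r / 2)) as H; replace (y + r / 2 - y) with (r / 2) in H by ring.
      apply H; rewrite Rabs_pos_eq; lra. }
    (* convergent terms are bounded, which bounds the radius from below *)
    destruct (maj_by_pos _ (exist _ 0 (proj1 (is_lim_seq_Reals _ _) (ex_series_lim_0 _ Hconv))))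
      as [M [_ HM]].
    intros h Hh; apply Rbar_lt_le_trans with (Finite (r / 2)); [exact Hh|].
    exact (proj1 (CV_radius_bounded a) (r / 2) (ex_intro _ M HM)). }
  assert (Sg : smooth_ball (r / 2) g).
  { apply smooth_ball_ext with (PSeries a); [|now apply smooth_ball_PSeries].
    intros h Hh; apply is_pseries_unique; unfold g.
    pose proof (Ha (h + y)) as H; replace (h + y - y) with h in H by ring.
    apply H; lra. }
  apply ex_derive_ext with (fun z => Derive_n g n (z + - y)).
  { intros z; rewrite <- Derive_n_comp_trans; apply Derive_n_ext; intros t.
    unfold g; f_equal; ring. }
  apply (ex_derive_comp (Derive_n g n) (fun z => z + - y)).
  - apply Sg; replace (y + - y) with 0 by ring; rewrite Rabs_R0; lra.
  - exists (1 + 0); apply is_derive_Rplus; [apply is_derive_Rid|apply is_derive_Rconst].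
Qed.

Lemma real_analytic2_slice_smooth eb (F : R -> R -> R) x :
  0 < eb -> real_analytic2_on (fun _ e => Rabs e < eb) F ->
  exists r, 0 < r /\ r <= eb /\ smooth_ball r (F x).
Proof.
  intros Heb HF.
  assert (H0 : Rabs 0 < eb) by (rewrite Rabs_R0; exact Heb).
  destruct (HF x 0 H0) as [r [Hr [a Ha]]].
  assert (Hin : forall e, Rabs e < Rmin r eb ->
            Rabs e < eb /\ Rabs (x - x) < r /\ Rabs (e - 0) < r).
  { intros e He; pose proof (Rmin_l r eb); pose proof (Rmin_r r eb).
    rewrite Rminus_diag, Rminus_0_r, Rabs_R0; repeat split; lra. }
  exists (Rmin r eb); split; [now apply Rmin_glb_lt|split; [apply Rmin_r|]].
  apply smooth_ball_ext with (PSeries (a 0%nat)).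
  - intros e He; destruct (Hin e He) as (H1 & H2 & H3).
    destruct (Ha x e H1 H2 H3) as (_ & _ & ->).
    rewrite Series_first.
    + unfold PSeries; apply Series_ext; intros j; simpl; rewrite Rminus_0_r; ring.
    + intros i; rewrite Rminus_diag, Series_first; [simpl; ring|intros j; simpl; ring].
  - apply smooth_ball_PSeries, CV_radius_gt; intros s Hs.
    assert (Hs' : Rabs s < Rmin r eb) by (rewrite Rabs_pos_eq; lra).
    destruct (Hin s Hs') as (H1 & H2 & H3).
    destruct (Ha x s H1 H2 H3) as (E & _ & _).
    eapply ex_series_ext; [|exact (E 0%nat)]; intros j; simpl.
    rewrite Rminus_0_r; f_equal; ring.
Qed.

Lemma solution_data_branch p q f eb eta (Delta Y : R -> R -> R) x :
  solution_data p q f eb eta Delta Y ->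
  exists r, periodic_branch (rot_number p q) q f (Delta x) (Y x) x r.
Proof.
  intros (_ & Hf & Heb & _ & HD & HY & H0 & Hsol & _).
  destruct (real_analytic2_slice_smooth eb Delta x Heb HD) as [r1 [Hr1 [Hr1e S1]]].
  destruct (real_analytic2_slice_smooth eb Y x Heb HY) as [r2 [Hr2 [Hr2e S2]]].
  pose proof (Rmin_l r1 r2); pose proof (Rmin_r r1 r2).
  exists (Rmin r1 r2); split.
  - now apply Rmin_glb_lt.
  - now apply real_analytic_smooth.
  - now apply smooth_ball_le with r1.
  - now apply smooth_ball_le with r2.
  - apply H0.
  - apply H0.
  - intros e He; apply (Hsol x e); lra.
  - intros e He; apply (Hsol x e); lra.
Qed.

Lemma poly_bounded_vars_deg q n P : poly_bounded q n (Z.of_nat n) P -> poly_vars_deg q n n P.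
Proof. apply Forall_impl; intros m [Hm Hl]; split; [exact Hm|lia]. Qed.

Theorem mainTheorem5 (p : Z) (q : nat) (Hq : (1 <= q)%nat) :
  (forall n : nat, (1 <= n)%nat ->
     exists PD PY : polynomial,
       poly_vars_deg q n n PD /\ poly_vars_deg q n n PY /\
       forall (f : R -> R) (eb eta : R) (Delta Y : R -> R -> R),
         solution_data p q f eb eta Delta Y ->
         forall x : R,
           eps_coeff Delta n x =
             eval_poly PD (fun k l => Derive_n f l (x + INR k * rot_number p q)) /\
           eps_coeff Y n x =
             eval_poly PY (fun k l => Derive_n f l (x + INR k * rot_number p q))) /\
  (forall (f : R -> R) (eb eta : R) (Delta Y : R -> R -> R),
     solution_data p q f eb eta Delta Y ->
     forall x : R,
       eps_coeff Delta 1 x = - fbar q (rot_number p q) f x /\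
       eps_coeff Y 1 x =
         - ((INR q + 1) / 2) * fbar q (rot_number p q) f x
         + fbarbar q (rot_number p q) f x).
Proof.
  split.
  - intros n _.
    destruct (jets_representable_all (rot_number p q) q Hq n) as [HD HY].
    destruct (representable_scal (/ INR (Factorial.fact n)) HD) as [PD [HPD ED]].
    destruct (representable_scal (/ INR (Factorial.fact n)) HY) as [PY [HPY EY]].
    exists PD, PY; split; [|split]; try now apply poly_bounded_vars_deg.
    intros f eb eta Delta Y Hsol x.
    destruct (solution_data_branch p q f eb eta Delta Y x Hsol) as [r B].
    specialize (ED (BranchInstance f (Delta x) (Y x) x) (ex_intro _ r B)).
    specialize (EY (BranchInstance f (Delta x) (Y x) x) (ex_intro _ r B)).
    unfold eps_coeff, Rdiv; rewrite Rmult_comm, (Rmult_comm (Derive_n _ n 0)).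
    split; assumption.
  - intros f eb eta Delta Y Hsol x.
    destruct (solution_data_branch p q f eb eta Delta Y x Hsol) as [r B].
    destruct (branch_first_jets Hq B) as [D1 Y1].
    assert (Hq0 : INR q <> 0) by (apply not_0_INR; lia).
    unfold eps_coeff, fbar, fbarbar; rewrite !rsum_seq; simpl (INR (Factorial.fact 1)).
    change (fun e => Delta x e) with (Delta x); change (fun e => Y x e) with (Y x).
    split; [rewrite D1|rewrite Y1, D1]; field; exact Hq0.
Qed.
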